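(* There is a constant $c$ such that for every $n\in\mathbb{N}_{\ge1}$ there exists a language $L_n$ recognized by a deterministic weak Muller automaton $\mathfrak{A}_n$ with Emerson–Lei acceptance condition, of size at most $c\cdot n$, such that Player $O$ wins $\Gamma_f(L_n)$ for some constant delay function $f$, but Player $I$ wins $\Gamma_g(L_n)$ for every delay function $g$ with $\sum_{i=0}^{n-1}g(i)\le 2^{2^n}$.
   Context: An $\omega$-automaton $\mathfrak{A}=(Q,\Sigma,q_I,\Delta,\mathrm{Acc})$ has finite state set $Q$, alphabet $\Sigma$, initial state $q_I$, transitions $\Delta\subseteq Q\times\Sigma\times Q$, accepting runs $\mathrm{Acc}\subseteq\Delta^\omega$; $L(\mathfrak{A})$ is the set of words processed by an initial accepting run. Deterministic means $\Delta$ is a total function $Q\times\Sigma\to Q$. A weak Muller automaton has $\mathcal{F}\subseteq 2^Q$ and accepts runs whose set of visited states lies in $\mathcal{F}$. Emerson–Lei representation: $\mathcal{F}$ is given by a Boolean formula $\varphi$ over variables $Q$, $\mathcal{F}$ being the sets $F\subseteq Q$ such that the assignment making exactly the elements of $F$ true satisfies $\varphi$; the size of the automaton is $|Q|+|\varphi|$ ($|\varphi|$ the length of $\varphi$). A delay function is $f:\mathbb{N}\to\mathbb{N}_{\ge1}$; it is constant if $f(i)=1$ for all $i>0$. In the delay game $\Gamma_f(L)$, $L\subseteq(\Sigma_I\times\Sigma_O)^\omega$, in round $i=0,1,\dots$ Player $I$ picks $u_i\in\Sigma_I^{f(i)}$ and then Player $O$ picks $v_i\in\Sigma_O$; $O$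 wins the play iff $\binom{u_0u_1\cdots}{v_0v_1\cdots}\in L$. Strategies: $\tau_I:\Sigma_O^*\to\Sigma_I^*$ with $|\tau_I(w)|=f(|w|)$, $\tau_O:\Sigma_I^+\to\Sigma_O$; a player wins the game if she/he has a strategy winning all consistent plays. *)

From mathcomp Require Import all_boot.
Set Implicit Arguments. Unset Strict Implicit. Unset Printing Implicit Defensive.

Inductive elform (V : Type) : Type :=
| ELTrue : elform V
| ELFalse : elform V
| ELVar : V -> elform V
| ELNeg : elform V -> elform V
| ELAnd : elform V -> elform V -> elform V
| ELOr : elform V -> elform V -> elform V.

Fixpoint elsize V (phi : elform V) : nat :=
  match phi with
  | ELTrue | ELFalse | ELVar _ => 1
  | ELNeg p => (elsize p).+1
  | ELAnd p q | ELOr p q => (elsize p + elsize q).+1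
  end.

Fixpoint elsat V (F : V -> Prop) (phi : elform V) : Prop :=
  match phi with
  | ELTrue => True
  | ELFalse => False
  | ELVar x => F x
  | ELNeg p => ~ elsat F p
  | ELAnd p q => elsat F p /\ elsat F q
  | ELOr p q => elsat F p \/ elsat F q
  end.

Record DWMA (Sigma : Type) := {
  dstate : finType;
  dinit : dstate;
  dtrans : dstate -> Sigma -> dstate;
  dacc : elform dstate }.

Definition dwma_size Sigma (A : DWMA Sigma) : nat :=
  #|dstate A| + elsize (dacc A).

Fixpoint drun Sigma (A : DWMA Sigma) (w : nat -> Sigma) (k : nat) : dstate A :=
  match k with
  | 0 => dinit A
  | k'.+1 => dtrans (drun A w k') (w k')
  end.

Definition visited Sigma (A : DWMA Sigma) (w : nat -> Sigma) : dstate A -> Prop :=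
  fun q => exists k, @drun Sigma A w k = q.

Definition dlang Sigma (A : DWMA Sigma) : (nat -> Sigma) -> Prop :=
  fun w => elsat (@visited Sigma A w) (dacc A).

Definition delay_fun (f : nat -> nat) : Prop := forall i, 1 <= f i.
Definition constant_delay (f : nat -> nat) : Prop := forall i, 0 < i -> f i = 1.

Definition blockstart (f : nat -> nat) (i : nat) : nat := \sum_(j < i) f j.

Definition block T (f : nat -> nat) (alpha : nat -> T) (i : nat) : seq T :=
  mkseq (fun j => alpha (blockstart f i + j)) (f i).

(* a play given by the concatenated input word alpha = u_0 u_1 ... and
   output word v = v_0 v_1 ... *)
Definition outcome (SI SO : Type) (alpha : nat -> SI) (v : nat -> SO) :
  nat -> SI * SO := fun k => (alpha k, v k).

Definition strategyI (SI SO : Type) (f : nat -> nat) (tauI : seq SO -> seq SI) : Prop :=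
  forall w, size (tauI w) = f (size w).

Definition consistentI (SI SO : Type) (f : nat -> nat) (tauI : seq SO -> seq SI)
  (alpha : nat -> SI) (v : nat -> SO) : Prop :=
  forall i, block f alpha i = tauI (mkseq v i).

(* Player O strategy tauO : SI^+ -> SO (its value on the empty word is never used) *)
Definition consistentO (SI SO : Type) (f : nat -> nat) (tauO : seq SI -> SO)
  (alpha : nat -> SI) (v : nat -> SO) : Prop :=
  forall i, v i = tauO (mkseq alpha (blockstart f i.+1)).

Definition I_wins (SI SO : Type) (f : nat -> nat) (L : (nat -> SI * SO) -> Prop) : Prop :=
  exists tauI : seq SO -> seq SI, strategyI f tauI /\
    forall alpha v, consistentI f tauI alpha v -> ~ L (outcome alpha v).

Definition O_wins (SI SO : Type) (f : nat -> nat) (L : (nat -> SI * SO) -> Prop) : Prop :=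
  exists tauO : seq SI -> SO,
    forall alpha v, consistentO f tauO alpha v -> L (outcome alpha v).

From HB Require Import structures.
From mathcomp Require Import all_boot.
From mathcomp Require Import zify.
Set Implicit Arguments. Unset Strict Implicit. Unset Printing Implicit Defensive.

(* Player I is meant to write a binary counter whose values have 2^n bits: the letter at
   position k carries the offset of k in its block of 2^n letters, the counter bit at that
   offset and the carry into it, so that the counter runs through all 2^(2^n) values within
   horizon = 2^(2^n) * 2^n letters; O's first output bit is a guess of the flag written at
   position horizon.  Whenever I deviates from the counter, O can point at the first error
   by a claim that the automaton checks with O(n) states: addresses and carries are checked
   locally, and a wrong counter bit at p is checked against p - 2^n by recording the n address
   bits at both positions; since every recording state is visited at most once, the
   Emerson-Lei formula on the set of visited states can test that the two addresses agree.
   With delay horizon + 1 in the first round O sees the whole counter before its first move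
   and wins.  If the first round is shorter than horizon, I plays the correct counter and sets
   the flag against O's guess, so that no claim of O can succeed. *)

Definition bitn (x i : nat) : bool := odd (x %/ 2 ^ i).

Definition ones_below (x a : nat) : bool := x %% 2 ^ a == (2 ^ a).-1.

Lemma bitnS x a : bitn x.+1 a = bitn x a (+) ones_below x a.
Proof.
rewrite /bitn /ones_below; have Hp : 0 < 2 ^ a by rewrite expn_gt0.
rewrite {1}(divn_eq x (2 ^ a)); have Hr := ltn_pmod x Hp.
set q := x %/ 2 ^ a; set r := x %% 2 ^ a.
case: eqP => Hre.
- have -> : (q * 2 ^ a + r).+1 = q.+1 * 2 ^ a by rewrite Hre mulSn; lia.
  by rewrite mulnK // oddS addbT.
- by rewrite -addnS divnMDl // divn_small ?addn0 ?addbF //; lia.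
Qed.

Lemma bitn_modn_exp2 x e a : a < e -> bitn (x %% 2 ^ e) a = bitn x a.
Proof.
move=> lt_ae; rewrite /bitn; have Hp : 0 < 2 ^ a by rewrite expn_gt0.
have He : 2 ^ e = 2 ^ (e - a) * 2 ^ a by rewrite -expnD subnK // ltnW.
rewrite {2}(divn_eq x (2 ^ e)) He mulnA divnMDl // oddD oddM oddX.
by rewrite subn_eq0 leqNgt lt_ae andbF.
Qed.

Lemma ones_belowS x a : ones_below x a.+1 = ones_below x a && bitn x a.
Proof.
rewrite /bitn /ones_below; have Hp : 0 < 2 ^ a by rewrite expn_gt0.
have -> : x %% 2 ^ a.+1 = odd (x %/ 2 ^ a) * 2 ^ a + x %% 2 ^ a.
  rewrite expnS mulnC {1}(divn_eq x (2 ^ a)) {1}(divn_eq (x %/ 2 ^ a) 2) modn2.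
  rewrite mulnDl -mulnA [2 * _]mulnC -addnA modnMDl modn_small //.
  by have := ltn_pmod x Hp; case: (odd _); lia.
rewrite expnS; have := ltn_pmod x Hp.
move: Hp; set r := x %% 2 ^ a; set t := 2 ^ a.
case: (odd _) => /= Ht Hr; last by rewrite andbF; apply/negbTE/eqP; lia.
by apply/idP/idP => /eqP H; apply/eqP; lia.
Qed.

Lemma ones_below0 x : ones_below x 0.
Proof. by rewrite /ones_below expn0 modn1. Qed.

Lemma bitn_inj j x y : x < 2 ^ j -> y < 2 ^ j ->
  (forall i, i < j -> bitn x i = bitn y i) -> x = y.
Proof.
elim: j x y => [|j IH] x y; first by rewrite expn0 !ltnS !leqn0 => /eqP -> /eqP ->.
move=> Hx Hy Hxy; have := Hxy 0 isT; rewrite /bitn expn0 !divn1 => Hodd.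
have Hhalf : x./2 = y./2.
  apply: IH; try by move: Hx Hy; rewrite expnS; lia.
  by move=> i Hi; rewrite /bitn -!divn2 -!divnMA -expnS; exact: Hxy.
by rewrite -(odd_double_half x) -(odd_double_half y) Hodd Hhalf.
Qed.

Lemma bitn_pred_exp2 e j : j < e -> bitn (2 ^ e).-1 j.
Proof.
move=> lt_je; rewrite /bitn; have Hp : 0 < 2 ^ j by rewrite expn_gt0.
have Hq : 0 < 2 ^ (e - j) by rewrite expn_gt0.
have -> : (2 ^ e).-1 = (2 ^ (e - j)).-1 * 2 ^ j + (2 ^ j).-1.
  rewrite -{1}(subnK (ltnW lt_je)) expnD.
  by move: Hp Hq; set a := 2 ^ j; set b := 2 ^ (e - j); nia.
rewrite divnMDl // divn_small ?addn0; last by rewrite prednK.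
have : odd (2 ^ (e - j)) = false by rewrite oddX subn_eq0 leqNgt lt_je.
by rewrite -(prednK Hq) /=; case: (odd _).
Qed.

Definition elAll (I V : Type) (phi : I -> elform V) (s : seq I) : elform V :=
  foldr (fun i psi => ELAnd (phi i) psi) (ELTrue V) s.

Lemma elsat_elAll (I : eqType) V (F : V -> Prop) (phi : I -> elform V) s :
  elsat F (elAll phi s) <-> (forall i, i \in s -> elsat F (phi i)).
Proof.
elim: s => [|i s IH] /=; first by split.
split=> [[Hi /IH Hs] j|Hall].
- by rewrite inE => /predU1P [->|]; [exact: Hi | exact: Hs].
- split; first by apply: Hall; rewrite mem_head.
  by apply/IH => j Hj; apply: Hall; rewrite inE Hj orbT.
Qed.

Lemma elsize_elAll I V (phi : I -> elform V) s c :
  (forall i, elsize (phi i) <= c) -> elsize (elAll phi s) <= c.+1 * size s + 1.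
Proof. by move=> Hc; elim: s => [|i s IH] /=; [lia | have := Hc i; lia]. Qed.

Section Rank.
Variables (Sigma : Type) (A : DWMA Sigma) (rank : dstate A -> nat).
Hypothesis rank_step : forall s a, rank s <= rank (dtrans s a).

Definition rank_strict (s : dstate A) := forall a, rank s < rank (dtrans s a).

Lemma drun_rank_mono w k1 k2 : k1 <= k2 -> rank (drun A w k1) <= rank (drun A w k2).
Proof.
move/subnK <-; elim: (k2 - k1) => [|d IH] //.
by rewrite addSn; exact: leq_trans IH (rank_step _ _).
Qed.

(* A state that strictly raises the rank is left at once and can never be re-entered. *)
Lemma drun_strict_rank_inj w k1 k2 :
  rank_strict (drun A w k1) -> rank_strict (drun A w k2) ->
  rank (drun A w k1) = rank (drun A w k2) -> k1 = k2.
Proof.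
wlog lt_12 : k1 k2 / k1 < k2 => [W S1 S2 E12|S1 _ E12].
  by case: (ltngtP k1 k2) => // H; [exact: W | apply/esym/W].
by have := drun_rank_mono w lt_12; have := S1 (w k1); rewrite /= E12; lia.
Qed.

End Rank.

Lemma blockstartS f i : blockstart f i.+1 = blockstart f i + f i.
Proof. by rewrite /blockstart big_ord_recr. Qed.

Lemma blockstart_cover f : delay_fun f ->
  forall k, exists i, blockstart f i <= k < blockstart f i.+1.
Proof.
move=> Hf; elim=> [|k [i /andP [H1 H2]]].
  by exists 0; rewrite blockstartS /blockstart big_ord0; exact: Hf.
case: (ltnP k.+1 (blockstart f i.+1)) => H3; first by exists i; rewrite H3 ltnW.
by exists i.+1; rewrite (blockstartS f i.+1); have := Hf i.+1; lia.
Qed.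

Section Construction.
Variable m : nat.
Local Notation n := m.+1.

Definition width := 2 ^ n.
Definition nvals := 2 ^ width.
Definition horizon := nvals * width.

Lemma n_lt_width : n < width. Proof. exact: ltn_expl. Qed.
Lemma width_gt1 : 1 < width. Proof. by have := n_lt_width; lia. Qed.
Lemma width_gt0 : 0 < width. Proof. by have := width_gt1; lia. Qed.
Lemma nvals_gt1 : 1 < nvals.
Proof. by rewrite /nvals -{1}(expn0 2) ltn_exp2l //; have := width_gt1; lia. Qed.
Lemma nvals_lt_horizon : nvals < horizon.
Proof. by rewrite ltn_Pmulr ?width_gt1 // ltnW // nvals_gt1. Qed.
Lemma twice_m_lt_width : (2 * m).+1 < width.
Proof. by rewrite /width; elim: m => [//|k IH]; rewrite expnS; lia. Qed.

(* Position k lies in block [cblock k] at offset [caddr k]; the block holds the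
   binary expansion of the value [cvalue k], which is incremented from block to block. *)
Definition caddr k := k %% width.
Definition cblock k := k %/ width.
Definition cvalue k := cblock k %% nvals.
Definition cbit k := bitn (cvalue k) (caddr k).
Definition ccarry k := ones_below (cvalue k) (caddr k).

Lemma caddr_lt k : caddr k < width. Proof. by apply: ltn_pmod; have := width_gt1; lia. Qed.
Lemma cblock_caddr k : k = cblock k * width + caddr k. Proof. exact: divn_eq. Qed.
Lemma caddr0 : caddr 0 = 0. Proof. by rewrite /caddr mod0n. Qed.
Lemma ccarry0 : ccarry 0. Proof. by rewrite /ccarry caddr0 ones_below0. Qed.
Lemma ccarry_caddr0 k : caddr k = 0 -> ccarry k.
Proof. by rewrite /ccarry => ->; exact: ones_below0. Qed.

Lemma caddrS k : caddr k.+1 = (caddr k).+1 %% width.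
Proof. by rewrite /caddr -addn1 -modnDml addn1. Qed.

Lemma caddr_add_width k : caddr (k + width) = caddr k.
Proof. exact: modnDr. Qed.

Lemma cblock_add_width k : cblock (k + width) = (cblock k).+1.
Proof. by rewrite /cblock addnC -{1}[width]mul1n divnMDl ?add1n //; have := width_gt1; lia. Qed.

Lemma cblock_mono j k : j <= k -> cblock j <= cblock k.
Proof. exact: leq_div2r. Qed.

Lemma cblock_caddr_inj j k :
  caddr j = caddr k -> cblock j = (cblock k).+1 -> j = k + width.
Proof. by move=> Ha Hb; rewrite (cblock_caddr j) (cblock_caddr k) Ha Hb mulSn; lia. Qed.

Lemma caddrS_split k :
  (caddr k == width.-1 /\ caddr k.+1 = 0 /\ cblock k.+1 = (cblock k).+1) \/
  (caddr k != width.-1 /\ caddr k.+1 = (caddr k).+1 /\ cblock k.+1 = cblock k).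
Proof.
have HE := width_gt0; have Hc := caddr_lt k.
have Hk : k.+1 = cblock k * width + (caddr k).+1 by rewrite {1}(cblock_caddr k) addnS.
case: eqP => Hw; [left | right]; split=> //.
- have Hk' : k.+1 = (cblock k).+1 * width + 0 by rewrite Hk mulSn; lia.
  by rewrite /caddr /cblock Hk' modnMDl mod0n divnMDl ?div0n ?addn0 //; lia.
- have Hs : (caddr k).+1 < width by lia.
  rewrite /caddr /cblock Hk modnMDl modn_small // divnMDl // divn_small // addn0.
  by split.
Qed.

Lemma ccarryS k : ccarry k.+1 = if caddr k == width.-1 then true else ccarry k && cbit k.
Proof.
case: (caddrS_split k) => [[-> [H1 H2]] | [/negbTE -> [H1 H2]]].
- exact: ccarry_caddr0.
- by rewrite /ccarry /cbit /cvalue H1 H2 ones_belowS.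
Qed.

Lemma cbit_add_width k : cbit (k + width) = cbit k (+) ccarry k.
Proof.
rewrite /cbit caddr_add_width /cvalue cblock_add_width -addn1 -modnDml addn1.
by rewrite /nvals bitn_modn_exp2 ?caddr_lt // bitnS.
Qed.

Lemma cbit_small k : k < width -> cbit k = false.
Proof. by move=> H; rewrite /cbit /cvalue /cblock divn_small // mod0n /bitn div0n. Qed.

(* A carry out of the last bit can only happen once the counter has reached its maximum. *)
Lemma carry_out_horizon k : ccarry k -> cbit k -> caddr k = width.-1 -> horizon <= k.+1.
Proof.
move=> Hc Hx Ha; have HE := width_gt1; have HN := nvals_gt1.
have Hv : cvalue k < 2 ^ width by apply: ltn_pmod; lia.
have Hmax : cvalue k = nvals.-1.
  have := ones_belowS (cvalue k) (caddr k); rewrite -/(ccarry k) -/(cbit k) Hc Hx.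
  have -> : (caddr k).+1 = width by rewrite Ha; lia.
  by rewrite /ones_below modn_small // => /eqP.
have Hb := divn_eq (cblock k) nvals; rewrite -/(cvalue k) Hmax in Hb.
case: (caddrS_split k) => [[_ [H2 H3]] | [H2 _]]; last by rewrite Ha eqxx in H2.
rewrite /horizon (cblock_caddr k.+1) H2 H3 Hb; set q := _ %/ _; nia.
Qed.

Lemma cbit_last_block j : j < width -> cbit ((nvals.-1 * width) + j).
Proof.
move=> Hj; have HN := nvals_gt1.
have Ha : caddr (nvals.-1 * width + j) = j by rewrite /caddr modnMDl modn_small.
have Hb : cblock (nvals.-1 * width + j) = nvals.-1.
  by rewrite /cblock divnMDl ?divn_small ?addn0 //; lia.
by rewrite /cbit /cvalue Ha Hb modn_small ?bitn_pred_exp2 //; lia.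
Qed.

Definition crossed q k := cblock k == (cblock q).+1.

Lemma crossedS q k : q <= k -> cblock k <= (cblock q).+1 ->
  ~~ (crossed q k && (caddr k == width.-1)) ->
  (crossed q k || (caddr k == width.-1)) = crossed q k.+1 /\ cblock k.+1 <= (cblock q).+1.
Proof.
move=> Hqk Hb; have := cblock_mono Hqk; rewrite /crossed.
case: (caddrS_split k) => [[-> [_ ->]] | [/negbTE -> [_ ->]]]; last by rewrite andbF orbF.
by rewrite andbT orbT => H1 /eqP H2; split; [apply/esym/eqP|]; lia.
Qed.

Lemma crossedS_within q k : q <= k -> k < q + width ->
  ~~ (crossed q k && (caddr k == width.-1)) /\
  (crossed q k || (caddr k == width.-1)) = crossed q k.+1.
Proof.
move=> Hqk Hkp; have Hb1 : cblock k.+1 <= (cblock q).+1.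
  by rewrite -cblock_add_width; apply: cblock_mono.
have Hb := leq_trans (cblock_mono (leqnSn k)) Hb1.
have Hno : ~~ (crossed q k && (caddr k == width.-1)).
  apply/negP => /andP [/eqP Hc Hw].
  case: (caddrS_split k) => [[_ [_ H]] | [H _]]; last by rewrite Hw in H.
  by move: Hb1; rewrite H Hc ltnn.
by split=> //; case: (crossedS Hqk Hb Hno).
Qed.

Local Notation letter := ('I_width * bool * bool * bool)%type.

Definition laddr (l : letter) : nat := l.1.1.1.
Definition lbit (l : letter) : bool := l.1.1.2.
Definition lcarry (l : letter) : bool := l.1.2.
Definition lflag (l : letter) : bool := l.2.
Definition lwrap (l : letter) : bool := laddr l == width.-1.
Definition bit_back (l : letter) i : bool := bitn ((laddr l + (width - i)) %% width) i.
Definition bit_ahead (l : letter) i : bool := bitn ((laddr l + (m - i)) %% width) i.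

(* Claims of Player O that Player I has left the canonical counter word:
   [ClaimAddr i] at position p-1: bit i of the address at p is wrong;
   [ClaimCarry] at p-1: the carry at p is wrong;
   [ClaimZero] at p: the counter bit at p is wrong although p is in the first block;
   [ClaimFrom] at p - width and [ClaimTo] at p - m: the counter bit at p differs from
     the bit and carry at p - width (the two addresses are compared by the acceptance
     condition, which sees only the set of visited states);
   [ClaimEnd] at horizon - width: the counter is complete, so O's first output bit
     predicts the flag at position horizon. *)
Inductive claim := NoClaim | ClaimAddr of 'I_n | ClaimCarry | ClaimZero
  | ClaimFrom | ClaimTo | ClaimEnd.

Definition claim_code (x : claim) : option ('I_n + 'I_5) :=
  match x with
  | NoClaim => None | ClaimAddr i => Some (inl i)
  | ClaimCarry => Some (inr (@Ordinal 5 0 isT)) | ClaimZero => Some (inr (@Ordinal 5 1 isT))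
  | ClaimFrom => Some (inr (@Ordinal 5 2 isT)) | ClaimTo => Some (inr (@Ordinal 5 3 isT))
  | ClaimEnd => Some (inr (@Ordinal 5 4 isT))
  end.
Definition claim_decode (y : option ('I_n + 'I_5)) : option claim :=
  Some match y with
  | None => NoClaim | Some (inl i) => ClaimAddr i
  | Some (inr j) => match val j with
      0 => ClaimCarry | 1 => ClaimZero | 2 => ClaimFrom | 3 => ClaimTo | _ => ClaimEnd end
  end.
Lemma claim_codeK : pcancel claim_code claim_decode. Proof. by case. Qed.
HB.instance Definition _ := Finite.copy claim (pcan_type claim_codeK).

Local Notation output := (bool * claim)%type.

(* [Rec1 i b e c] / [Rec2 i b e c] record bit [b] of the source / target address;
   [e] is the expected counter bit and [c] tells whether a block boundary was crossed. *)
Inductive state := Start | Wait of bool & bool | ChkAddr of 'I_n & bool | ChkCarry of bool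
  | Rec1 of 'I_n & bool & bool & bool | Gap of bool & bool
  | Rec2 of 'I_n & bool & bool & bool | Rec2Last of bool
  | Ones of bool | Flag of bool | Acc | Rej.

Definition state_code (s : state) : 'I_12 * 'I_n * bool * bool * bool :=
  match s with
  | Start => (@Ordinal 12 0 isT, ord0, false, false, false)
  | Wait b c => (@Ordinal 12 1 isT, ord0, b, c, false)
  | ChkAddr i b => (@Ordinal 12 2 isT, i, b, false, false)
  | ChkCarry b => (@Ordinal 12 3 isT, ord0, b, false, false)
  | Rec1 i a b c => (@Ordinal 12 4 isT, i, a, b, c)
  | Gap b c => (@Ordinal 12 5 isT, ord0, b, c, false)
  | Rec2 i a b c => (@Ordinal 12 6 isT, i, a, b, c)
  | Rec2Last b => (@Ordinal 12 7 isT, ord0, b, false, false)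
  | Ones b => (@Ordinal 12 8 isT, ord0, b, false, false)
  | Flag b => (@Ordinal 12 9 isT, ord0, b, false, false)
  | Acc => (@Ordinal 12 10 isT, ord0, false, false, false)
  | Rej => (@Ordinal 12 11 isT, ord0, false, false, false)
  end.
Definition state_decode (x : 'I_12 * 'I_n * bool * bool * bool) : option state :=
  let: (t, i, a, b, c) := x in
  Some match val t with
  | 0 => Start | 1 => Wait a b | 2 => ChkAddr i a | 3 => ChkCarry a | 4 => Rec1 i a b c
  | 5 => Gap a b | 6 => Rec2 i a b c | 7 => Rec2Last a | 8 => Ones a | 9 => Flag a
  | 10 => Acc | _ => Rej end.
Lemma state_codeK : pcancel state_code state_decode. Proof. by case. Qed.
HB.instance Definition _ := Finite.copy state (pcan_type state_codeK).

Lemma card_state : #|{: state}| <= 96 * n.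
Proof.
apply: leq_trans (leq_card _ (pcan_inj state_codeK)) _.
by rewrite !card_prod !card_ord card_bool; lia.
Qed.

Definition wait_step (b wr : bool) (l : letter) (c : claim) : state :=
  match c with
  | NoClaim => Wait b (wr || lwrap l)
  | ClaimAddr i => ChkAddr i (bitn ((laddr l).+1 %% width) i)
  | ClaimCarry => ChkCarry (if lwrap l then true else lcarry l && lbit l)
  | ClaimZero => if ~~ wr && lbit l then Acc else Rej
  | ClaimFrom => Rec1 ord0 (bit_back l 0) (lbit l (+) lcarry l) (lwrap l)
  | ClaimTo => Rej
  | ClaimEnd => if (laddr l == 0) && lbit l then (if lwrap l then Flag b else Ones b) else Rej
  end.

Definition rec2_step (i : nat) (e cr : bool) (l : letter) : state :=
  if i == m then (if cr && (lbit l != e) then Rec2Last (bit_ahead l i) else Rej)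
  else if cr && lwrap l then Rej
  else if i < m then Rec2 (inord i) (bit_ahead l i) e (cr || lwrap l) else Rej.

Definition step (s : state) (y : letter * output) : state :=
  let: (l, o) := y in
  match s with
  | Start => if (laddr l != 0) || ~~ lcarry l then Acc else wait_step o.1 false l o.2
  | Wait b wr => wait_step b wr l o.2
  | ChkAddr i b => if bitn (laddr l) i != b then Acc else Rej
  | ChkCarry c => if lcarry l != c then Acc else Rej
  | Rec1 i _ e cr => if cr && lwrap l then Rej else
      if i < m then Rec1 (inord i.+1) (bit_back l i.+1) e (cr || lwrap l)
      else Gap e (cr || lwrap l)
  | Gap e cr => if o.2 is ClaimTo then rec2_step 0 e cr l else
      if cr && lwrap l then Rej else Gap e (cr || lwrap l)
  | Rec2 i _ e cr => rec2_step i.+1 e cr l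
  | Rec2Last _ => Rej
  | Ones b => if lbit l then (if lwrap l then Flag b else Ones b) else Rej
  | Flag b => if lflag l == b then Acc else Rej
  | Acc => Acc
  | Rej => Rej
  end.

Definition seen1 (i : 'I_n) (b : bool) : elform state :=
  ELOr (ELOr (ELVar (Rec1 i b false false)) (ELVar (Rec1 i b false true)))
       (ELOr (ELVar (Rec1 i b true false)) (ELVar (Rec1 i b true true))).
Definition seen2 (i : 'I_n) (b : bool) : elform state :=
  if val i == m then ELVar (Rec2Last b) else
  ELOr (ELOr (ELVar (Rec2 i b false false)) (ELVar (Rec2 i b false true)))
       (ELOr (ELVar (Rec2 i b true false)) (ELVar (Rec2 i b true true))).
Definition same_bit (i : 'I_n) : elform state :=
  ELOr (ELAnd (seen1 i true) (seen2 i true)) (ELAnd (seen1 i false) (seen2 i false)).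

Definition aut : DWMA (letter * output) :=
  {| dstate := state; dinit := Start; dtrans := step;
     dacc := ELOr (ELVar Acc) (elAll same_bit (enum 'I_n)) |}.

Lemma size_aut : dwma_size aut <= 200 * n.
Proof.
have Hf i : elsize (same_bit i) <= 31 by rewrite /same_bit /seen2; case: ifP.
have := elsize_elAll (enum 'I_n) Hf; rewrite size_enum_ord.
have Hcard : #|dstate aut| <= 96 * n := card_state.
rewrite /dwma_size; have -> : elsize (dacc aut) = (elsize (elAll same_bit (enum 'I_n))).+2 by [].
by move: Hcard; set N := #|dstate aut|; set X := elsize _; lia.
Qed.

Definition canon (l : letter) k := [/\ laddr l = caddr k, lbit l = cbit k & lcarry l = ccarry k].
Definition canonb (l : letter) k := [&& laddr l == caddr k, lbit l == cbit k & lcarry l == ccarry k].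

Lemma canonP l k : reflect (canon l k) (canonb l k).
Proof. by apply: (iffP and3P) => [[/eqP ? /eqP ? /eqP ?]|[-> -> ->]]. Qed.

Lemma lwrapE l k : laddr l = caddr k -> lwrap l = (caddr k == width.-1).
Proof. by rewrite /lwrap => ->. Qed.

Lemma bit_backE l q i : laddr l = caddr (q + i) -> i <= width -> bit_back l i = bitn (caddr q) i.
Proof. by move=> Ha Hi; rewrite /bit_back Ha /caddr modnDml -addnA subnKC // modnDr. Qed.

Lemma bit_aheadE l k i : laddr l = caddr k -> bit_ahead l i = bitn (caddr (k + (m - i))) i.
Proof. by move=> Ha; rewrite /bit_ahead Ha /caddr modnDml. Qed.

Lemma elsat_seen1 (F : state -> Prop) i b :
  elsat F (seen1 i b) <-> exists e c, F (Rec1 i b e c).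
Proof.
split=> [|[e [c H]]] /=; last by case: e c H => [] [] H; [right; right | right; left | left; right | left; left].
by move=> [[H|H]|[H|H]]; do 2 eexists; exact: H.
Qed.

Lemma elsat_seen2 (F : state -> Prop) i b : elsat F (seen2 i b) <->
  if val i == m then F (Rec2Last b) else exists e c, F (Rec2 i b e c).
Proof.
rewrite /seen2; case: eqP => _ //=.
split=> [|[e [c H]]]; last by case: e c H => [] [] H; [right; right | right; left | left; right | left; left].
by move=> [[H|H]|[H|H]]; do 2 eexists; exact: H.
Qed.

(* [lia] is very slow when the context holds equations between booleans; drop them first. *)
Ltac nat_lia := repeat match goal with H : @eq bool _ ?b |- _ =>
  tryif (first [constr_eq b true | constr_eq b false]) then fail else clear H end; lia.

(** * Ranks: the recording states are visited at most once *)

Definition rank (s : state) : nat :=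
  match s with
  | Start | Wait _ _ => 0
  | Rec1 i _ _ _ => (val i).+1
  | Gap _ _ => n.+1
  | Rec2 i _ _ _ => n.+2 + val i
  | Rec2Last _ => 3 * n + 2
  | _ => 3 * n + 3
  end.

Lemma rank_rec2_step i e cr l : n.+1 + i < rank (rec2_step i e cr l) \/ rec2_step i e cr l = Rej.
Proof.
rewrite /rec2_step; case: eqP => Hi; first by case: ifP => _; [left => /=; lia | right].
case: ifP => _; first by right.
by case: ifP => Hl; [left => /=; rewrite inordK; lia | right].
Qed.

Lemma rank_step s y : rank s <= rank (step s y).
Proof.
case: y => l [b c]; case: s => //=.
- by move=> i b'; case: ifP.
- by move=> c'; case: ifP.
- move=> i b' e cr; have := ltn_ord i; case: ifP => _ /=; first lia.
  by case: ifP => Hi /=; [rewrite inordK; lia | lia].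
- move=> e cr; case: c => /=; try by case: ifP => _ /=; lia.
  by case: (rank_rec2_step 0 e cr l) => [|->] /=; lia.
- by move=> i b' e cr; case: (rank_rec2_step i.+1 e cr l) => [|->] /=; have := ltn_ord i; lia.
- by move=> b'; lia.
- by move=> b'; case: ifP => _ //=; case: ifP => _ /=; lia.
- by move=> b'; case: ifP => _ /=; lia.
Qed.

Lemma rank_strict_rec (s : dstate aut) :
  0 < rank s -> rank s != n.+1 -> rank s < 3 * n + 3 -> rank_strict (A := aut) rank s.
Proof.
case: s => /=; try (intros; lia).
- move=> i b e cr _ H1 H2 [l [b' c]] /=; have := ltn_ord i.
  case: ifP => _ /=; first lia.
  by case: ifP => Hi /=; [rewrite inordK; lia | lia].
- by move=> i b e cr _ H1 H2 [l [b' c]] /=; case: (rank_rec2_step i.+1 e cr l) => [|->] /=; lia.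
- by move=> b _ H1 H2 [l [b' c]] /=; lia.
Qed.

Section Run.
Variables (alpha : nat -> letter) (v : nat -> output).

Definition run k := drun aut (outcome alpha v) k.
Local Notation seen := (visited (A := aut) (outcome alpha v)).

Lemma runS k : run k.+1 = step (run k) (alpha k, v k). Proof. by []. Qed.

Lemma run_unique_rank k1 k2 : 0 < rank (run k1) -> rank (run k1) != n.+1 ->
  rank (run k1) < 3 * n + 3 -> rank (run k1) = rank (run k2) -> k1 = k2.
Proof.
move=> H0 H1 H2 E12.
by apply: (@drun_strict_rank_inj _ aut rank rank_step _ _ _ _ _ E12); apply: rank_strict_rec; rewrite -?E12.
Qed.

Lemma wait_run k d b wr : run k = Wait b wr ->
  (forall j, k <= j < k + d -> (v j).2 = NoClaim) ->
  exists wr', run (k + d) = Wait b wr' /\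
    (wr = false -> (forall j, k <= j < k + d -> ~~ lwrap (alpha j)) -> wr' = false).
Proof.
move=> Hk; elim: d => [|d IH] Hc; first by exists wr; rewrite addn0.
have [wr' [H1 H2]] : exists wr', run (k + d) = Wait b wr' /\
    (wr = false -> (forall j, k <= j < k + d -> ~~ lwrap (alpha j)) -> wr' = false).
  by apply: IH => j /andP [Hj1 Hj2]; apply: Hc; rewrite Hj1 /=; lia.
exists (wr' || lwrap (alpha (k + d))); rewrite addnS runS H1 /= Hc; last by apply/andP; split; lia.
split=> // Hw Hnw; rewrite H2 //.
- by apply/negbTE/Hnw; apply/andP; split; lia.
- by move=> j /andP [Hj1 Hj2]; apply: Hnw; apply/andP; split; lia.
Qed.

Lemma run_to_claim s c : laddr (alpha 0) = caddr 0 -> lcarry (alpha 0) = ccarry 0 ->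
  (forall j, j < s -> (v j).2 = NoClaim) -> (v s).2 = c ->
  exists wr, run s.+1 = wait_step (v 0).1 wr (alpha s) c /\
    ((forall j, j < s -> ~~ lwrap (alpha j)) -> wr = false).
Proof.
move=> Ha Hc Hcl <-; rewrite caddr0 in Ha; rewrite ccarry0 in Hc.
have H1 : run 1 = wait_step (v 0).1 false (alpha 0) (v 0).2 by rewrite runS /= Ha Hc.
case: s Hcl => [|s] Hcl; first by exists false.
have H1' : run 1 = Wait (v 0).1 (lwrap (alpha 0)) by rewrite H1 Hcl.
have [wr' [H2 H3]] := @wait_run 1 s _ _ H1' (fun j Hj => Hcl j ltac:(lia)).
exists wr'; rewrite runS -(add1n s) H2 /=; split=> // Hnw.
by apply: H3 => [|j Hj]; [apply/negbTE/Hnw | apply: Hnw; lia].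
Qed.

(** * Player I: the canonical word with a flag refuting O's guess *)

Section PlayerI.
Hypothesis alpha_canon : forall k, canon (alpha k) k.
Let guess := (v 0).1.
Hypothesis flag_refutes : forall k, horizon <= k -> lflag (alpha k) = ~~ guess.

Lemma lwrap_canon k : lwrap (alpha k) = (caddr k == width.-1).
Proof. by case: (alpha_canon k) => Ha _ _; exact: lwrapE. Qed.

Lemma crossed_run q k cr : q <= k -> cr = crossed q k -> cblock k <= (cblock q).+1 ->
  ~~ (cr && lwrap (alpha k)) ->
  (cr || lwrap (alpha k)) = crossed q k.+1 /\ cblock k.+1 <= (cblock q).+1.
Proof. by move=> Hqk -> Hb; rewrite lwrap_canon; exact: crossedS. Qed.

(* [q] is the position claimed by [ClaimFrom]; the Rec1 states were visited right after it. *)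
Definition from_ok (q k : nat) (e cr : bool) :=
  [/\ e = cbit q (+) ccarry q, cr = crossed q k, cblock k <= (cblock q).+1 &
      forall j, j < n -> rank (run (q + j.+1)) = j.+1].

Definition inv (k : nat) (s : state) : Prop :=
  match s with
  | Start => k = 0
  | Wait b wr => b = guess /\ (~~ wr -> k < width)
  | ChkAddr i b => b = bitn (caddr k) i
  | ChkCarry c => c = ccarry k
  | Rec1 i b e cr => i < k /\ b = bitn (caddr (k - i.+1)) i /\
      [/\ e = cbit (k - i.+1) (+) ccarry (k - i.+1), cr = crossed (k - i.+1) k,
         cblock k <= (cblock (k - i.+1)).+1 &
         forall j, j <= i -> rank (run (k - i.+1 + j.+1)) = j.+1]
  | Gap e cr => exists q, q + n <= k /\ from_ok q k e cr
  | Rec2 i b e cr => [/\ i < m, i < k &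
      exists q, [/\ q + n <= k - i.+1, from_ok q k e cr,
        b = bitn (caddr (k.-1 + (m - i))) i &
        forall j, j <= i -> rank (run (k - i.+1 + j.+1)) = n.+2 + j]]
  | Rec2Last b => 0 < k /\ m <= k.-1 /\ exists q,
      [/\ b = bitn (caddr k.-1) m, cblock k.-1 = (cblock q).+1,
       cbit k.-1 != cbit q (+) ccarry q,
       forall j, j < n -> rank (run (q + j.+1)) = j.+1 &
       forall j, j < m -> rank (run (k.-1 - m + j.+1)) = n.+2 + j]
  | Ones b => b = guess /\ ccarry k
  | Flag b => b = guess /\ horizon <= k
  | Acc => False
  | Rej => True
  end.

Lemma inv_wait_step k b wr c : b = guess -> (~~ wr -> k < width) ->
  run k.+1 = wait_step b wr (alpha k) c -> inv k.+1 (run k.+1).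
Proof.
move=> Hb Hwr Hr; rewrite Hr; case: (alpha_canon k) => Ha Hx Hc.
have HE := width_gt1.
case: c Hr => /= [Hr|i Hr|Hr|Hr|Hr|Hr|Hr] //.
- split=> //; rewrite negb_or lwrap_canon => /andP [/Hwr H1 /eqP H2].
  by move: H2; rewrite /caddr modn_small //; nat_lia.
- by rewrite Ha caddrS.
- by rewrite lwrap_canon Hc Hx ccarryS.
- by case: ifP => // /andP [/Hwr Hk]; rewrite Hx cbit_small.
- rewrite subSS subn0; split=> //; split; first by apply: bit_backE; rewrite ?addn0.
  have [Hc1 Hc2] := @crossed_run k k false (leqnn k) (esym (ltn_eqF (leqnn _))) (leqnSn _) isT.
  by split=> // [|j]; [rewrite Hx Hc | rewrite leqn0 => /eqP ->; rewrite addn1 Hr].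
- rewrite Ha Hx; case: eqP => [Ha0|] //=; case: ifP => // Hxk.
  case: ifP => Hw; split=> //.
  + apply: carry_out_horizon Hxk _; first exact: ccarry_caddr0.
    by move: Hw; rewrite lwrap_canon => /eqP.
  + by rewrite ccarryS -lwrap_canon Hw ccarry_caddr0.
Qed.

Lemma inv_rec1 k i b e cr : run k = Rec1 i b e cr -> inv k (Rec1 i b e cr) ->
  inv k.+1 (run k.+1).
Proof.
move=> Hs [Hik [Hb [He Hcr Hbl Hrk]]]; rewrite runS Hs /=.
set q := k - i.+1 in Hb He Hcr Hbl Hrk.
have Hkq : k = q + i.+1 by rewrite /q subnK.
have Hqk : q <= k by nat_lia.
case: ifP => Hov //; have [Hc1 Hc2] := crossed_run Hqk Hcr Hbl (negbT Hov).
case: ifP => Hi; last first.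
  by exists q; split; [have := ltn_ord i; nat_lia | split=> // j Hj; apply: Hrk; have := ltn_ord i; nat_lia].
have Hiv : nat_of_ord (inord i.+1 : 'I_n) = i.+1 by rewrite inordK.
rewrite /= Hiv; split; first nat_lia.
have -> : k.+1 - i.+2 = q by nat_lia.
split.
  apply: bit_backE; last by have := n_lt_width; nat_lia.
  by rewrite -Hkq; case: (alpha_canon k).
split=> // j Hj; case: (ltngtP j i.+1) => Hji; [exact: Hrk | nat_lia |].
subst j; have -> : q + i.+2 = k.+1 by nat_lia.
by rewrite runS Hs /= Hov Hi /= Hiv.
Qed.

Lemma inv_rec2_step k i q e cr : i <= m -> q + n <= k - i -> from_ok q k e cr ->
  (forall j, j < i -> rank (run (k - i + j.+1)) = n.+2 + j) ->
  run k.+1 = rec2_step i e cr (alpha k) -> inv k.+1 (run k.+1).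
Proof.
move=> Him Hqn [He Hcr Hbl Hrk1] Hrk2 Hr; have Hqk : q <= k by nat_lia.
case: (alpha_canon k) => Ha Hx _.
move: Hr; rewrite {1}/rec2_step; case: eqP => [Hi|/eqP Hi].
  case: ifP => [/andP [Hcr' Hxe] Hr | _ ->] //; rewrite Hr /=.
  split=> //; split; first by nat_lia.
  exists q; split=> //.
  - by rewrite (bit_aheadE _ Ha) Hi subnn addn0.
  - by move: Hcr'; rewrite Hcr => /eqP.
  - by rewrite -Hx -He.
  - by subst i.
case: ifP => Hov; first by move=> ->.
have [Hc1 Hc2] := crossed_run Hqk Hcr Hbl (negbT Hov).
case: ifP => Hlt; last by move=> ->.
move=> Hr; rewrite Hr /=.
have Hiv : nat_of_ord (inord i : 'I_n) = i by rewrite inordK.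
rewrite Hiv; split=> //; first by nat_lia.
exists q; have -> : k.+1 - i.+1 = k - i by nat_lia.
split=> //; first by rewrite (bit_aheadE _ Ha).
move=> j Hj; case: (ltngtP j i) => Hji; [exact: Hrk2 | nat_lia |].
subst j; have -> : k - i + i.+1 = k.+1 by nat_lia.
by rewrite Hr /= Hiv.
Qed.

Lemma inv_gap k e cr : run k = Gap e cr -> inv k (Gap e cr) -> inv k.+1 (run k.+1).
Proof.
move=> Hs [q [Hqn Hok]]; have Hqk : q <= k by nat_lia.
have := runS k; rewrite Hs /=; case: (v k) => b [|i|||||] /= Hr; last 2 first.
  by apply: (inv_rec2_step (q := q)) Hr; rewrite ?subn0.
all: rewrite Hr; case: Hok => He Hcr Hbl Hrk; case: ifP => Hov //.
all: have [Hc1 Hc2] := crossed_run Hqk Hcr Hbl (negbT Hov).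
all: by exists q; split; [nat_lia | split].
Qed.

Lemma inv_rec2 k i b e cr : run k = Rec2 i b e cr -> inv k (Rec2 i b e cr) ->
  inv k.+1 (run k.+1).
Proof.
move=> Hs [Him Hik [q [Hqn Hok _ Hrk]]].
apply: (inv_rec2_step (i := i.+1) Him Hqn Hok); last by rewrite runS Hs.
by move=> j Hj; apply: Hrk.
Qed.

Lemma inv_run k : inv k (run k).
Proof.
elim: k => [//|k IH]; have Hr := runS k; case: (alpha_canon k) => Ha Hx Hc.
move: IH Hr; case Hs: (run k) => [|b wr|i b|c|i b e cr|e cr|i b e cr|b|b|b||] /= IH Hr.
- subst k; move: Hr; rewrite Ha Hc caddr0 ccarry0 /= => Hr.
  by apply: (inv_wait_step (wr := false) _ _ Hr) => // _; exact: width_gt0.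
- by case: IH => Hb Hw; exact: (inv_wait_step Hb Hw Hr).
- by rewrite Hr Ha IH eqxx.
- by rewrite Hr Hc IH eqxx.
- exact: inv_rec1 Hs IH.
- exact: inv_gap Hs IH.
- exact: inv_rec2 Hs IH.
- by rewrite Hr.
- case: IH => Hb Hcc; move: Hr; rewrite Hx lwrap_canon.
  case: ifP => Hxk; last by move=> ->.
  case: ifP => Hw Hr; rewrite Hr /=; split=> //.
  + by apply: carry_out_horizon => //; exact/eqP.
  + by rewrite ccarryS Hw Hcc Hxk.
- by case: IH => Hb HP; rewrite Hr (flag_refutes HP) Hb; case: (guess).
- by [].
- by rewrite Hr.
Qed.

Lemma seen1_bit q i b : (forall j, j < n -> rank (run (q + j.+1)) = j.+1) ->
  elsat seen (seen1 i b) -> b = bitn (caddr q) i.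
Proof.
move=> Hrk /elsat_seen1 [e [c [k Hk]]].
have := inv_run k; rewrite /run Hk /= => [[Hik [-> [_ _ _ Hrk1]]]].
have Hi := ltn_ord i; have E1 := Hrk1 i (leqnn i); have E2 := Hrk i Hi.
have Hq : q + i.+1 = k - i.+1 + i.+1 by apply: run_unique_rank; rewrite ?E1 ?E2 //; apply/eqP; nat_lia.
by have -> : q = k - i.+1 by nat_lia.
Qed.

Lemma seen2_bit t b' i b : run t = Rec2Last b' ->
  elsat seen (seen2 i b) -> b = bitn (caddr t.-1) i.
Proof.
move=> Ht; have := inv_run t; rewrite Ht /= => [[_ [Hmt [q [_ _ _ _ Hrk]]]]].
move/elsat_seen2; case: eqP => [Him [t2 Ht2] | /eqP Him [e [c [k Hk]]]].
  have := inv_run t2; rewrite /run Ht2 /= => [[_ [_ [q2 [-> _ _ _ _]]]]].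
  have Ht2' : run t2 = Rec2Last b := Ht2.
  have -> : t2 = t.
    by apply: run_unique_rank; rewrite Ht2' ?Ht //=; try apply/eqP; nat_lia.
  by rewrite Him.
have Him' : i < m by rewrite ltn_neqAle Him -ltnS ltn_ord.
have := inv_run k; rewrite /run Hk /= => [[_ Hik [q2 [_ _ -> Hrk2]]]].
have E1 := Hrk2 i (leqnn i); have E2 := Hrk i Him'.
have Hk' : t.-1 - m + i.+1 = k - i.+1 + i.+1.
  by apply: run_unique_rank; rewrite ?E1 ?E2 //; apply/eqP; nat_lia.
by congr (bitn (caddr _) _); nat_lia.
Qed.

Lemma I_rejects : ~ dlang aut (outcome alpha v).
Proof.
move=> [[k Hk] | /elsat_elAll Hall]; first by have := inv_run k; rewrite /run Hk.
have Hsame i : elsat seen (same_bit i) := Hall i (mem_enum _ i).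
have [t [b Ht]] : exists t b, run t = Rec2Last b.
  by case: (Hsame ord_max) => [[_ H]|[_ H]]; move/elsat_seen2: H; rewrite /= eqxx => -[t Ht];
    exists t; eexists; exact: Ht.
have := inv_run t; rewrite Ht /= => [[_ [_ [q [_ Hblk Hbit Hrk _]]]]].
have Haddr : caddr t.-1 = caddr q.
  apply: (@bitn_inj n); rewrite -/width ?caddr_lt // => i Hi.
  have := Hsame (Ordinal Hi); rewrite /same_bit /=.
  by case=> [[H1 H2]|[H1 H2]]; rewrite -(seen1_bit Hrk H1) -(seen2_bit Ht H2).
by move: Hbit; rewrite (cblock_caddr_inj Haddr Hblk) cbit_add_width eqxx.
Qed.

End PlayerI.

(** * Player O: every deviation from the canonical word can be claimed *)

Section PlayerO.

Lemma dlang_of_acc k : run k = Acc -> dlang aut (outcome alpha v).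
Proof. by move=> H; left; exists k. Qed.

Lemma start_accepts : (laddr (alpha 0) != 0) || ~~ lcarry (alpha 0) ->
  dlang aut (outcome alpha v).
Proof. by move=> H; apply: (@dlang_of_acc 1); rewrite runS /= H. Qed.

Lemma claim_addr_accepts p i : 0 < p -> (forall j, j < p -> canon (alpha j) j) ->
  (forall j, j < p.-1 -> (v j).2 = NoClaim) -> (v p.-1).2 = ClaimAddr i ->
  bitn (laddr (alpha p)) i != bitn (caddr p) i -> dlang aut (outcome alpha v).
Proof.
move=> Hp Hcan Hcl Hc Hb; have [Ha0 _ Hc0] := Hcan 0 Hp.
have [wr [Hr _]] := run_to_claim Ha0 Hc0 Hcl Hc.
have [Ha _ _] : canon (alpha p.-1) p.-1 by apply: Hcan; rewrite ltn_predL.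
apply: (@dlang_of_acc p.+1); rewrite runS -{1}(ltn_predK Hp) Hr /= Ha -caddrS.
by rewrite (ltn_predK Hp) Hb.
Qed.

Lemma claim_carry_accepts p : 0 < p -> (forall j, j < p -> canon (alpha j) j) ->
  (forall j, j < p.-1 -> (v j).2 = NoClaim) -> (v p.-1).2 = ClaimCarry ->
  lcarry (alpha p) != ccarry p -> dlang aut (outcome alpha v).
Proof.
move=> Hp Hcan Hcl Hc Hb; have [Ha0 _ Hc0] := Hcan 0 Hp.
have [wr [Hr _]] := run_to_claim Ha0 Hc0 Hcl Hc.
have [Ha Hx Hcr] : canon (alpha p.-1) p.-1 by apply: Hcan; rewrite ltn_predL.
apply: (@dlang_of_acc p.+1); rewrite runS -{1}(ltn_predK Hp) Hr /=.
by rewrite (lwrapE Ha) Hx Hcr -ccarryS (ltn_predK Hp) Hb.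
Qed.

Lemma claim_zero_accepts p : p < width -> (forall j, j < p -> canon (alpha j) j) ->
  laddr (alpha p) = caddr p -> lcarry (alpha p) = ccarry p ->
  (forall j, j < p -> (v j).2 = NoClaim) -> (v p).2 = ClaimZero ->
  lbit (alpha p) != cbit p -> dlang aut (outcome alpha v).
Proof.
move=> HpE Hcan Hap Hcp Hcl Hc Hb.
have [Ha0 Hc0] : laddr (alpha 0) = caddr 0 /\ lcarry (alpha 0) = ccarry 0.
  by case: (posnP p) => [Hp0|Hp]; [rewrite -Hp0 | case: (Hcan 0 Hp)].
have [wr [Hr Hw]] := run_to_claim Ha0 Hc0 Hcl Hc.
have Hwr : wr = false.
  apply: Hw => j Hj; have [Ha _ _] := Hcan j Hj.
  by rewrite (lwrapE Ha) /caddr modn_small; apply/eqP; lia.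
apply: (@dlang_of_acc p.+1); rewrite Hr Hwr /=.
by move: Hb; rewrite cbit_small //; case: (lbit _).
Qed.

Lemma claim_end_accepts : (forall j, j < horizon -> canon (alpha j) j) ->
  (forall j, j < horizon - width -> (v j).2 = NoClaim) -> (v (horizon - width)).2 = ClaimEnd ->
  lflag (alpha horizon) = (v 0).1 -> dlang aut (outcome alpha v).
Proof.
move=> Hcan Hcl Hc Hf; have HE := width_gt1; have HN := nvals_gt1.
set s0 := horizon - width.
have Hs : s0 = nvals.-1 * width by rewrite /s0 /horizon -subn1 mulnBl mul1n.
have HPs : horizon = s0 + width by rewrite /s0 subnK // /horizon leq_pmull //; lia.
have Hca j : j < width -> caddr (s0 + j) = j.
  by move=> Hj; rewrite /caddr Hs modnMDl modn_small.
have Hbit j : j < width -> cbit (s0 + j) by rewrite Hs; exact: cbit_last_block.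
have Hcanj j : j < width -> canon (alpha (s0 + j)) (s0 + j) by move=> Hj; apply: Hcan; lia.
have [Ha0 _ Hc0] := Hcan 0 ltac:(lia).
have [wr [Hr _]] := run_to_claim Ha0 Hc0 Hcl Hc.
have Hones j : j < width ->
    run (s0 + j.+1) = if j == width.-1 then Flag (v 0).1 else Ones (v 0).1.
  elim: j => [|j IH] Hj.
  - have [Ha Hx _] := Hcanj 0 Hj; rewrite !addn0 in Ha Hx.
    have Hs0 : caddr s0 = 0 by rewrite -[s0]addn0 Hca.
    have Hx0 : cbit s0 by rewrite -[s0]addn0 Hbit.
    by rewrite addn1 Hr /= /lwrap Ha Hx Hs0 Hx0.
  - have Hne : (j == width.-1) = false by apply/eqP; lia.
    rewrite addnS runS (IH (ltnW Hj)) Hne /=.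
    have [Ha Hx _] := Hcanj j.+1 Hj.
    by rewrite Hx Hbit // /lwrap Ha Hca.
have := Hones width.-1 ltac:(lia); rewrite prednK ?eqxx -?HPs; last lia.
by move=> HP; apply: (@dlang_of_acc horizon.+1); rewrite runS HP /= Hf eqxx.
Qed.

Section ClaimBit.
Variable p : nat.
Hypotheses (width_le_p : width <= p) (canon_before : forall j, j < p -> canon (alpha j) j).
Hypotheses (laddr_p : laddr (alpha p) = caddr p) (lbit_p : lbit (alpha p) != cbit p).
Hypotheses (no_claim1 : forall j, j < p - width -> (v j).2 = NoClaim)
  (claim_from : (v (p - width)).2 = ClaimFrom)
  (no_claim2 : forall j, p - width < j < p - m -> (v j).2 = NoClaim)
  (claim_to : (v (p - m)).2 = ClaimTo).

Let q := p - width.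
Let r := p - m.
Let e := cbit q (+) ccarry q.

Lemma pos_from_add_width : p = q + width. Proof. by rewrite /q subnK. Qed.
Lemma pos_from_lt_to : q + n < r. Proof. by rewrite /r /q; have := twice_m_lt_width; lia. Qed.

Lemma crossed_step k : q <= k -> k < p ->
  ~~ (crossed q k && lwrap (alpha k)) /\ (crossed q k || lwrap (alpha k)) = crossed q k.+1.
Proof.
move=> H1 H2; have [Ha _ _] := canon_before H2; rewrite (lwrapE Ha).
by apply: crossedS_within; rewrite -?pos_from_add_width.
Qed.

Lemma rec1_run i : i < n -> run (q + i.+1) = Rec1 (inord i) (bitn (caddr q) i) e (crossed q (q + i.+1)).
Proof.
have HE := width_gt1; have Hqr := pos_from_lt_to; have Hpq := pos_from_add_width.
elim: i => [|i IH] Hi.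
- have Hqp : q < p by nat_lia.
  have [Ha Hx Hc] := canon_before Hqp.
  have [Ha0 _ Hc0] := canon_before (leq_ltn_trans (leq0n q) Hqp).
  have [wr [Hr _]] := run_to_claim Ha0 Hc0 no_claim1 claim_from.
  rewrite addn1 Hr /=.
  have -> : (inord 0 : 'I_n) = ord0 by apply: val_inj; rewrite /= inordK.
  have [_ H] := crossed_step (leqnn q) Hqp.
  rewrite (_ : crossed q q = false) /= in H; last by apply/eqP; nat_lia.
  congr Rec1; last exact: H.
  + by apply: bit_backE; rewrite ?addn0.
  + by rewrite Hx Hc.
- have Hk2 : q + i.+1 < p by nat_lia.
  rewrite addnS runS (IH (ltnW Hi)) /=.
  have Hiv : nat_of_ord (inord i : 'I_n) = i by rewrite inordK //; nat_lia.
  have [H1 H2] := crossed_step (leq_addr _ _) Hk2.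
  rewrite (negbTE H1) Hiv (_ : i < m); last by nat_lia.
  have [Ha _ _] := canon_before Hk2.
  congr Rec1; last by rewrite H2 addnS.
  by apply: (@bit_backE _ q i.+1); [rewrite Ha | nat_lia].
Qed.

Lemma gap_run d : q + n.+1 + d <= r -> run (q + n.+1 + d) = Gap e (crossed q (q + n.+1 + d)).
Proof.
have HE := width_gt1; have Hqr := pos_from_lt_to; have Hpq := pos_from_add_width.
elim: d => [|d IH] Hd.
- rewrite addn0 addnS runS (rec1_run (ltnSn m)) /=.
  have [H1 H2] := crossed_step (leq_addr n q) ltac:(nat_lia).
  by rewrite inordK // ltnn (negbTE H1) H2.
- rewrite addnS runS (IH ltac:(nat_lia)) /= no_claim2; last by apply/andP; split; nat_lia.
  have Hk1 : q <= q + n.+1 + d by nat_lia.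
  have [H1 H2] := crossed_step Hk1 ltac:(nat_lia).
  by rewrite (negbTE H1) H2.
Qed.

Lemma rec2_run i : i <= m -> run (r + i.+1) = rec2_step i e (crossed q (r + i)) (alpha (r + i)).
Proof.
have HE := width_gt1; have Hqr := pos_from_lt_to; have Hpq := pos_from_add_width.
elim: i => [|i IH] Hi.
- have Hgap : run r = Gap e (crossed q r).
    by have := @gap_run (r - (q + n.+1)); rewrite subnKC //; [apply | nat_lia].
  by rewrite addn0 addn1 runS Hgap /= claim_to.
- rewrite addnS runS (IH (ltnW Hi)) {1}/rec2_step (_ : (i == m) = false); last by apply/eqP; nat_lia.
  have Hk1 : q <= r + i by nat_lia.
  have [H1 H2] := crossed_step Hk1 ltac:(nat_lia).
  rewrite (negbTE H1) (_ : i < m) /=; last by nat_lia.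
  by rewrite inordK ?H2 ?addnS //; nat_lia.
Qed.

Lemma caddr_p : caddr p = caddr q.
Proof. by rewrite pos_from_add_width caddr_add_width. Qed.

Lemma rec2_bit_run i : i < m ->
  run (r + i.+1) = Rec2 (inord i) (bitn (caddr q) i) e (crossed q (r + i.+1)).
Proof.
move=> Hi; have Hqr := pos_from_lt_to; have Hpq := pos_from_add_width; have HE := width_gt1.
rewrite rec2_run ?(ltnW Hi) // /rec2_step (_ : (i == m) = false); last by apply/eqP; nat_lia.
have Hk1 : q <= r + i by nat_lia.
have Hk2 : r + i < p by nat_lia.
have [H1 H2] := crossed_step Hk1 Hk2; have [Ha _ _] := canon_before Hk2.
rewrite (negbTE H1) Hi H2 -addnS (bit_aheadE _ Ha) -caddr_p.
by congr (Rec2 _ (bitn (caddr _) _) _ _); nat_lia.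
Qed.

Lemma rec2last_run : run p.+1 = Rec2Last (bitn (caddr q) m).
Proof.
have Hqr := pos_from_lt_to; have Hpq := pos_from_add_width; have HE := width_gt1.
have Hcr : crossed q p by rewrite /crossed Hpq cblock_add_width.
have Hbit : lbit (alpha p) != e by rewrite /e -cbit_add_width -Hpq.
have Hrp : r + m = p by rewrite /r subnK //; nat_lia.
have := rec2_run (leqnn m); rewrite addnS Hrp /rec2_step eqxx Hcr Hbit /= => ->.
by rewrite (bit_aheadE _ laddr_p) subnn addn0 caddr_p.
Qed.

Lemma claim_bit_accepts : dlang aut (outcome alpha v).
Proof.
right; apply/elsat_elAll => i _.
suff [H1 H2] : elsat seen (seen1 i (bitn (caddr q) i)) /\ elsat seen (seen2 i (bitn (caddr q) i)).
  by rewrite /same_bit; case: (bitn _ _) H1 H2 => H1 H2; [left | right].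
split; first by apply/elsat_seen1; do 2 eexists; exists (q + i.+1); rewrite -/(run _) rec1_run // inord_val.
apply/elsat_seen2; case: eqP => [Him | /eqP Him].
  by exists p.+1; rewrite -/(run _) rec2last_run Him.
have Him' : i < m by rewrite ltn_neqAle Him -ltnS ltn_ord.
by do 2 eexists; exists (r + i.+1); rewrite -/(run _) rec2_bit_run // inord_val.
Qed.

End ClaimBit.

Definition wrong_bit (l : letter) p : 'I_n :=
  odflt ord0 [pick i : 'I_n | bitn (laddr l) i != bitn (caddr p) i].

Definition claim_at (c : claim) (pos i : nat) : claim := if i == pos then c else NoClaim.

Lemma claim_at_before c pos j : j < pos -> claim_at c pos j = NoClaim.
Proof. by rewrite /claim_at => /ltn_eqF ->. Qed.

Lemma claim_at_pos c pos : claim_at c pos pos = c.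
Proof. by rewrite /claim_at eqxx. Qed.

(* O's claims against a first non-canonical letter [l] at position [p]. *)
Definition dev_claim (l : letter) (p i : nat) : claim :=
  if laddr l != caddr p then claim_at (ClaimAddr (wrong_bit l p)) p.-1 i
  else if lcarry l != ccarry p then claim_at ClaimCarry p.-1 i
  else if p < width then claim_at ClaimZero p i
  else if i == p - width then ClaimFrom else claim_at ClaimTo (p - m) i.

Lemma wrong_bitP (l : letter) p : laddr l != caddr p ->
  bitn (laddr l) (wrong_bit l p) != bitn (caddr p) (wrong_bit l p).
Proof.
rewrite /wrong_bit; case: pickP => [i //|Hall]; move/eqP; case.
apply: (@bitn_inj n); [exact: ltn_ord | exact: caddr_lt |].
by move=> i Hi; have := Hall (Ordinal Hi); move/negbFE/eqP.
Qed.

Lemma deviation_accepts p : (forall j, j < p -> canon (alpha j) j) -> ~~ canonb (alpha p) p ->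
  (forall i, (v i).2 = dev_claim (alpha p) p i) -> dlang aut (outcome alpha v).
Proof.
move=> Hcan Hdev Hv; rewrite /dev_claim in Hv.
case: (eqVneq (laddr (alpha p)) (caddr p)) => Ha; rewrite ?Ha ?eqxx /= in Hv; last first.
  case: (posnP p) => Hp0; first by apply: start_accepts; move: Ha; rewrite Hp0 caddr0 => ->.
  apply: (claim_addr_accepts Hp0 Hcan) (wrong_bitP Ha); last by rewrite Hv claim_at_pos.
  by move=> j Hj; rewrite Hv claim_at_before.
case: (eqVneq (lcarry (alpha p)) (ccarry p)) => Hc; rewrite ?Hc ?eqxx /= in Hv; last first.
  case: (posnP p) => Hp0.
    by apply: start_accepts; move: Hc; rewrite Hp0 ccarry0; case: (lcarry _) => // _; rewrite orbT.
  apply: (claim_carry_accepts Hp0 Hcan) Hc; last by rewrite Hv claim_at_pos.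
  by move=> j Hj; rewrite Hv claim_at_before.
have Hx : lbit (alpha p) != cbit p by move: Hdev; rewrite /canonb Ha Hc !eqxx andbT.
case: (ltnP p width) => HpE.
  rewrite HpE in Hv; apply: (claim_zero_accepts HpE Hcan Ha Hc) Hx; last by rewrite Hv claim_at_pos.
  by move=> j Hj; rewrite Hv claim_at_before.
have Hmw := n_lt_width; rewrite ltnNge HpE /= in Hv.
apply: (claim_bit_accepts HpE Hcan Ha Hx) => [j Hj||j /andP [Hj1 Hj2]|].
- by rewrite Hv (ltn_eqF Hj) claim_at_before //; lia.
- by rewrite Hv eqxx.
- by rewrite Hv (gtn_eqF Hj1) claim_at_before.
- by rewrite Hv (_ : (p - m == p - width) = false) ?claim_at_pos //; apply/eqP; lia.
Qed.

End PlayerO.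
End Run.

Definition lookahead := horizon.+1.
Definition delayO (i : nat) := if i is 0 then lookahead else 1.

Definition first_dev (beta : nat -> letter) :=
  find (fun k => ~~ canonb (beta k) k) (iota 0 lookahead).

(* O sees the letters up to [horizon] before its first move: it either claims the first
   deviation, or it predicts the flag at [horizon] and claims the end of the counter. *)
Definition plan (beta : nat -> letter) (i : nat) : output :=
  let p := first_dev beta in
  if p < lookahead then (false, dev_claim (beta p) p i)
  else (if i == 0 then lflag (beta horizon) else false, claim_at ClaimEnd (horizon - width) i).

Definition any_letter : letter := (Ordinal width_gt0, false, false, false).

Definition tauO (s : seq letter) : output :=
  plan (nth any_letter (take lookahead s)) (size s - lookahead).

Lemma blockstart_delayO i : blockstart delayO i.+1 = lookahead + i.
Proof.
rewrite /blockstart big_ord_recl /=; congr (_ + _).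
by rewrite (eq_bigr (fun _ => 1)) // sum1_card card_ord.
Qed.

Lemma O_wins_aut : O_wins delayO (dlang aut).
Proof.
exists tauO => alpha v Hc.
pose beta := nth any_letter (mkseq alpha lookahead).
have Hv i : v i = plan beta i.
  rewrite Hc blockstart_delayO /tauO size_mkseq addKn; congr plan.
  by rewrite /mkseq iotaD map_cat take_size_cat // size_map size_iota.
have Hb k : k < lookahead -> beta k = alpha k by move=> Hk; rewrite /beta nth_mkseq.
set p := first_dev beta.
have Hp : p <= lookahead by have := find_size (fun k => ~~ canonb (beta k) k) (iota 0 lookahead); rewrite size_iota.
have Hbefore j : j < p -> canon (alpha j) j.
  move=> Hj; have Hj' : j < lookahead := leq_trans Hj Hp.
  by have := before_find 0 Hj; rewrite nth_iota // add0n Hb // => /negbFE /canonP.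
case: (ltnP p lookahead) => HpF.
  apply: (deviation_accepts Hbefore); last by move=> i; rewrite Hv /plan -/p HpF Hb.
  have := nth_find 0 (a := fun k => ~~ canonb (beta k) k) (s := iota 0 lookahead).
  by rewrite has_find size_iota -/(first_dev beta) -/p nth_iota // add0n Hb //; apply.
have Hvn i : v i = (if i == 0 then lflag (alpha horizon) else false, claim_at ClaimEnd (horizon - width) i).
  by rewrite Hv /plan -/p ltnNge HpF /= Hb.
apply: claim_end_accepts => [j Hj|j Hj||].
- by apply: Hbefore; apply: leq_trans HpF; exact: ltnW.
- by rewrite Hvn claim_at_before.
- by rewrite Hvn claim_at_pos.
- by rewrite Hvn.
Qed.

(* I plays the canonical word, and from its second block on sets the flag against O's first output. *)
Definition canon_letter k (flag : bool) : letter := (Ordinal (caddr_lt k), cbit k, ccarry k, flag).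

Definition tauI (g : nat -> nat) (w : seq output) : seq letter :=
  mkseq (fun j => canon_letter (blockstart g (size w) + j)
     (if size w is 0 then false else ~~ (head (false, NoClaim) w).1)) (g (size w)).

Lemma I_wins_aut g : delay_fun g -> g 0 < horizon -> I_wins g (dlang aut).
Proof.
move=> Hg Hg0; exists (tauI g); split=> [w|alpha v Hc]; first by rewrite size_mkseq.
have Hal k : exists i, alpha k = canon_letter k (if i is 0 then false else ~~ (v 0).1) /\
    (g 0 <= k -> 0 < i).
  have [i /andP [H1 H2]] := blockstart_cover Hg k; exists i.
  have Hj : k - blockstart g i < g i by rewrite blockstartS in H2; lia.
  have := congr1 (fun s => nth (canon_letter 0 false) s (k - blockstart g i)) (Hc i).
  rewrite /block /tauI !nth_mkseq ?size_mkseq // subnKC // => ->.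
  split; first by case: i {H1 H2 Hj}.
  by move=> Hk; case: i H1 H2 {Hj} => [|i] // _; rewrite blockstartS /blockstart big_ord0; lia.
apply: I_rejects => k; have [i [-> Hi]] := Hal k; first by [].
by move=> Hk; case: i Hi => [/(_ ltac:(lia))|i _].
Qed.

End Construction.

Theorem theorem3 :
  exists c : nat, forall n : nat, 1 <= n ->
    exists (SI SO : finType) (A : DWMA (SI * SO)%type),
      dwma_size A <= c * n /\
      (exists f, delay_fun f /\ constant_delay f /\ O_wins f (dlang A)) /\
      (forall g, delay_fun g -> \sum_(i < n) g i <= 2 ^ (2 ^ n) ->
         I_wins g (dlang A)).
Proof.
exists 200 => [[|m]] // _.
exists ('I_(width m) * bool * bool * bool)%type, (bool * claim m)%type, (aut m).
split; first exact: size_aut.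
split; first by exists (delayO m); split; [case | split; [case | exact: O_wins_aut]].
move=> g Hg Hsum; apply: I_wins_aut => //; apply: leq_ltn_trans (nvals_lt_horizon m).
by apply: leq_trans Hsum; rewrite big_ord_recl leq_addr.
Qed.
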